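(* Let $\boldsymbol Z$ be a square-integrable random vector in $\mathbb R^d$ and $Y$ a random element. Let $\{S_h\}_{h=1}^H$ be a partition of the range of $Y$ such that, for some $\gamma>0$ and $\tau>1+\gamma$, $0<\mathbb P(Y\in S_h)\le(1+\gamma)H^{-1}$ for all $h$, and for every unit $\boldsymbol\beta\in\mathbb R^d$, $$\frac1H\sum_{h=1}^H\mathrm{var}\big(\boldsymbol\beta^\top\mathbb E(\boldsymbol Z\mid Y)\mid Y\in S_h\big)\le\frac1\tau\mathrm{var}\big(\boldsymbol\beta^\top\mathbb E(\boldsymbol Z\mid Y)\big).$$ Let $W=\sum_{h=1}^H h\,\mathbf 1_{Y\in S_h}$. Then for every unit $\boldsymbol\beta\in\mathbb R^d$, $$\Big(1-\frac{1+\gamma}{\tau}\Big)\mathrm{var}\big(\boldsymbol\beta^\top\mathbb E(\boldsymbol Z\mid Y)\big)\le\mathrm{var}\big(\boldsymbol\beta^\top\mathbb E(\boldsymbol Z\mid W)\big).$$ *)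

From HB Require Import structures.
From mathcomp Require Import all_boot all_order all_algebra.
From mathcomp Require Import all_classical all_reals all_analysis.
Set Implicit Arguments. Unset Strict Implicit. Unset Printing Implicit Defensive.
Import Order.TTheory GRing.Theory Num.Theory.
Local Open Scope classical_set_scope.
Local Open Scope ring_scope.

Section Defs.
Context {dT : measure_display} {T : measurableType dT} {R : realType}.
Variable P : probability T R.

Definition expect (X : T -> R) : R := fine (\int[P]_x (X x)%:E).

Definition var_rv (X : T -> R) : R :=
  expect (fun x => (X x - expect X) ^+ 2).

Definition cexp_event (A : set T) (X : T -> R) : R :=
  fine (\int[P]_(x in A) (X x)%:E) / fine (P A).

Definition cvar_event (A : set T) (X : T -> R) : R :=
  cexp_event A (fun x => (X x - cexp_event A X) ^+ 2).

(* m \o V is a version of the conditional expectation E(X | V), i.e. E(X | sigma(V)):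
   m is measurable (so m \o V is sigma(V)-measurable, Doob-Dynkin), m \o V is
   integrable, and the integrals of X and m \o V agree on every event {V in B}. *)
Definition is_cond_exp {dU : measure_display} {U : measurableType dU}
  (V : T -> U) (X : T -> R) (m : U -> R) : Prop :=
  [/\ measurable_fun setT m,
      P.-integrable setT (fun x => (m (V x))%:E) &
      forall B : set U, measurable B ->
        (\int[P]_(x in V @^-1` B) (X x)%:E = \int[P]_(x in V @^-1` B) (m (V x))%:E)%E].

Definition is_cond_exp_vec {dU : measure_display} {U : measurableType dU} (d : nat)
  (V : T -> U) (Z : T -> 'rV[R]_d) (m : U -> 'rV[R]_d) : Prop :=
  forall i : 'I_d, is_cond_exp V (fun x => Z x ord0 i) (fun u => m u ord0 i).

End Defs.

Definition dotv {R : pzRingType} (d : nat) (b v : 'rV[R]_d) : R :=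
  \sum_(i < d) b ord0 i * v ord0 i.

From HB Require Import structures.
From mathcomp Require Import all_boot all_order all_algebra.
From mathcomp Require Import all_classical all_reals all_analysis.
From mathcomp Require Import measurable_realfun.
From mathcomp Require Import ring.
Set Implicit Arguments. Unset Strict Implicit. Unset Printing Implicit Defensive.
Import Order.TTheory GRing.Theory Num.Theory.
Local Open Scope classical_set_scope.
Local Open Scope ring_scope.

(* Put A_h := Y^-1(S_h), a finite measurable partition of the
   sample space with p_h := P(A_h) > 0, f := beta^T E(Z | Y) and
   g := beta^T E(Z | W).  Since W = h+1 on A_h, g is constant (= c_h) on A_h,
   and both f and g integrate like Z over A_h = W^-1{h+1}; hence
   E(f | A_h) = c_h and E f = E g.  The law of total variance along the
   partition then reads
        var f = sum_h p_h var(f | A_h) + sum_h p_h (c_h - E f)^2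
              = sum_h p_h var(f | A_h) + var g,
   and p_h <= (1+gamma)/H together with the hypothesis of the theorem gives
   sum_h p_h var(f | A_h) <= (1+gamma)/tau * var f, which is the claim.
   When (f - E f)^2 is not integrable, var f is 0 by convention and the claim
   reduces to var g >= 0. *)

Section IntegralsOverEvents.
Context (R : realType) (dT : measure_display) (T : measurableType dT)
  (P : probability T R).

Lemma integrable_affine (D : set T) (F : T -> R) (k1 k2 : R) :
  measurable D -> P.-integrable D (EFin \o F) ->
  P.-integrable D (EFin \o (fun x => k1 * F x + k2)).
Proof.
move=> mD iF.
have := integrableD mD (integrableZl mD k1 iF) (finite_measure_integrable_cst P k2 mD).
by apply: eq_integrable => // x _ /=; rewrite EFinD EFinM.
Qed.

Lemma Rintegral_affine (D : set T) (F : T -> R) (k1 k2 : R) :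
  measurable D -> P.-integrable D (EFin \o F) ->
  Rintegral P D (fun x => k1 * F x + k2) = k1 * Rintegral P D F + k2 * fine (P D).
Proof.
move=> mD iF; rewrite RintegralD //; last exact: finite_measure_integrable_cst.
  by rewrite RintegralZl // Rintegral_cst.
have := integrableZl mD k1 iF.
by apply: eq_integrable => // x _ /=; rewrite EFinM.
Qed.

Lemma Rintegral_dotv (d : nat) (D : set T) (F : T -> 'rV[R]_d) (b : 'rV[R]_d) :
  measurable D -> (forall i, P.-integrable D (EFin \o (fun x => F x ord0 i))) ->
  P.-integrable D (EFin \o (fun x => dotv b (F x))) /\
  Rintegral P D (fun x => dotv b (F x)) =
    \sum_i b ord0 i * Rintegral P D (fun x => F x ord0 i).
Proof.
move=> mD iF.
have iFb i : P.-integrable D (fun x => (b ord0 i)%:E * (F x ord0 i)%:E)%E.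
  exact: integrableZl (iF i).
have sumE : (fun x => (dotv b (F x))%:E) =
            (fun x => \sum_i (b ord0 i)%:E * (F x ord0 i)%:E)%E.
  by apply: funext => x; rewrite -sumEFin; apply: eq_bigr => i _; rewrite EFinM.
split; first by rewrite /comp sumE; exact: integrable_sum.
rewrite /Rintegral sumE (integral_sum mD iFb) -sum_fine; last first.
  by move=> i _; apply: integrable_fin_num.
apply: eq_bigr => i _; rewrite integralZl //.
  by have := integrable_fin_num mD (iF i); case: (\int[P]_(x in D) _)%E.
exact: iF.
Qed.

(* A variance is never negative (an infinite one is read as 0). *)
Lemma var_rv_ge0 (X : T -> R) : 0 <= var_rv P X.
Proof. by apply: fine_ge0; apply: integral_ge0 => x _; rewrite lee_fin sqr_ge0. Qed.

Lemma cvar_event_ge0 (A : set T) (X : T -> R) : 0 <= cvar_event P A X.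
Proof.
apply: divr_ge0; last exact/fine_ge0/measure_ge0.
by apply: Rintegral_ge0 => x _; exact: sqr_ge0.
Qed.

(* If (X - E X)^2 is not integrable, the integral defining var X is +oo and
   the real-valued variance is 0. *)
Lemma var_rv_not_integrable (X : T -> R) : measurable_fun setT X ->
  ~ P.-integrable setT (EFin \o (fun x => (X x - expect P X) ^+ 2)) ->
  var_rv P X = 0.
Proof.
move=> mX nint; rewrite /var_rv /expect.
suff -> : (\int[P]_x ((X x - fine (\int[P]_x (X x)%:E)) ^+ 2)%:E = +oo)%E by [].
apply/eqP; rewrite eq_le leey /= leNgt; apply/negP => fin; apply: nint.
apply/integrableP; split.
  by apply/measurable_EFinP; apply: measurable_funX; apply: measurable_funB.
under eq_integral do rewrite gee0_abs ?lee_fin ?sqr_ge0 //.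
exact: fin.
Qed.

Lemma Rintegral_sq_shift (D : set T) (X : T -> R) (a : R) :
  measurable D -> 0 < fine (P D) -> P.-integrable D (EFin \o X) ->
  P.-integrable D (EFin \o (fun x => (X x - a) ^+ 2)) ->
  Rintegral P D (fun x => (X x - a) ^+ 2) =
    fine (P D) * cvar_event P D X + fine (P D) * (cexp_event P D X - a) ^+ 2.
Proof.
move=> mD pD iX iXa; rewrite /cvar_event /cexp_event -/(Rintegral P D X).
set p := fine (P D); set e := Rintegral P D X / p.
have intX : Rintegral P D X = e * p by rewrite /e divfK // gt_eqF.
have Xe_sq : Rintegral P D (fun x => (X x - e) ^+ 2) =
    Rintegral P D (fun x => (X x - a) ^+ 2) + (2 * (a - e) * e * p + (e ^+ 2 - a ^+ 2) * p).
  rewrite (@eq_Rintegral _ _ _ _ _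
     (fun x => (X x - a) ^+ 2 + (2 * (a - e) * X x + (e ^+ 2 - a ^+ 2)))); last first.
    by move=> x _; ring.
  rewrite RintegralD //; last exact: integrable_affine.
  by rewrite Rintegral_affine // intX -/p mulrA.
rewrite -/(Rintegral P D (fun x => (X x - e) ^+ 2)) Xe_sq mulrC divfK ?gt_eqF //.
ring.
Qed.

End IntegralsOverEvents.

Section FinitePartition.
Context (R : realType) (dT : measure_display) (T : measurableType dT)
  (P : probability T R) (H : nat) (A : 'I_H -> set T).
Hypothesis mA : forall h, measurable (A h).
Hypothesis disjA : forall h k, h != k -> A h `&` A k = set0.
Hypothesis covA : forall x, exists h, A h x.
Hypothesis pA_gt0 : forall h, 0 < fine (P (A h)).

Let p h := fine (P (A h)).

Lemma partition_bigsetU : \big[setU/set0]_(h <- index_enum 'I_H) A h = setT.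
Proof.
rewrite -bigcup_seq; apply/seteqP; split => // x _.
have [h Ah] := covA x; exists h => //=.
by rewrite /index_enum -enumT mem_enum.
Qed.

Lemma partition_trivIset : trivIset [set` index_enum 'I_H] A.
Proof.
move=> i j _ _ [x [Ai Aj]]; apply/eqP; apply/negPn/negP => /disjA ij.
by have : (A i `&` A j) x by []; rewrite ij.
Qed.

Lemma Rintegral_partition (F : T -> R) : measurable_fun setT F ->
  (forall h, P.-integrable (A h) (EFin \o F)) ->
  Rintegral P setT F = \sum_(h < H) Rintegral P (A h) F.
Proof.
move=> mF iF.
have := integral_bigsetU_EFin P mA (index_enum_uniq _) partition_trivIset.
rewrite /= partition_bigsetU => E; rewrite /Rintegral E; last exact/measurable_EFinP.
rewrite -sum_fine //= => h _; exact: integrable_fin_num.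
Qed.

Lemma Rintegral_step (F : T -> R) (c : 'I_H -> R) : measurable_fun setT F ->
  (forall h x, A h x -> F x = c h) -> Rintegral P setT F = \sum_(h < H) c h * p h.
Proof.
move=> mF Fc; have FcA h : {in A h, F =1 fun=> c h}.
  by move=> x /set_mem; exact: Fc.
rewrite Rintegral_partition //.
  by apply: eq_bigr => h _; rewrite (eq_Rintegral _ (FcA h)) Rintegral_cst.
move=> h; apply: (eq_integrable (mA h) (EFin \o cst (c h))).
  by move=> x Ax /=; rewrite (FcA h x Ax).
exact: finite_measure_integrable_cst.
Qed.

Lemma total_variance (X : T -> R) : measurable_fun setT X ->
  P.-integrable setT (EFin \o X) ->
  P.-integrable setT (EFin \o (fun x => (X x - expect P X) ^+ 2)) ->
  var_rv P X = \sum_(h < H) p h * cvar_event P (A h) X +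
               \sum_(h < H) p h * (cexp_event P (A h) X - expect P X) ^+ 2.
Proof.
move=> mX iX iq; rewrite -big_split /var_rv /expect -/(Rintegral P setT _).
rewrite Rintegral_partition; last 2 first.
- by apply: measurable_funX; apply: measurable_funB.
- by move=> h; exact: integrableS (iq).
apply: eq_bigr => h _; rewrite Rintegral_sq_shift //.
  exact: integrableS iX.
exact: integrableS iq.
Qed.

Lemma var_coarsen (X g : T -> R) (c : 'I_H -> R) :
  measurable_fun setT X -> P.-integrable setT (EFin \o X) ->
  measurable_fun setT g -> (forall h x, A h x -> g x = c h) ->
  (forall h, Rintegral P (A h) X = Rintegral P (A h) g) ->
  P.-integrable setT (EFin \o (fun x => (X x - expect P X) ^+ 2)) ->
  var_rv P X = \sum_(h < H) p h * cvar_event P (A h) X + var_rv P g.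
Proof.
move=> mX iX mg gc XgA iq.
have intg h : Rintegral P (A h) g = c h * p h.
  rewrite -Rintegral_cst //; apply: eq_Rintegral => x /set_mem; exact: gc.
have cexpX h : cexp_event P (A h) X = c h.
  change (Rintegral P (A h) X / p h = c h).
  by rewrite XgA intg mulfK // gt_eqF // pA_gt0.
have EXg : expect P X = expect P g.
  change (Rintegral P setT X = Rintegral P setT g).
  rewrite (Rintegral_step mg gc).
  rewrite Rintegral_partition //; last by move=> h; exact: integrableS iX.
  by apply: eq_bigr => h _; rewrite XgA intg.
have varg : var_rv P g = \sum_(h < H) (c h - expect P X) ^+ 2 * p h.
  rewrite /var_rv -EXg; apply: Rintegral_step.
    by apply: measurable_funX; apply: measurable_funB.
  by move=> h x Ax; rewrite (gc h x Ax).
rewrite total_variance // varg; congr (_ + _).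
by apply: eq_bigr => h _; rewrite cexpX mulrC.
Qed.

End FinitePartition.

Lemma weighted_sum_le (R : realFieldType) (H : nat) (p x : 'I_H -> R) (K : R) :
  (forall h, p h <= K / H%:R) -> (forall h, 0 <= x h) ->
  \sum_(h < H) p h * x h <= K * (H%:R^-1 * \sum_(h < H) x h).
Proof.
move=> pK x0; rewrite mulrA mulr_sumr; apply: ler_sum => h _.
exact: ler_wpM2r.
Qed.

Section ConditionalExpectations.
Context (R : realType) (dT : measure_display) (T : measurableType dT)
  (P : probability T R) (d : nat) (Z : T -> 'rV[R]_d).

Lemma cond_exp_dotv (dU : measure_display) (U : measurableType dU) (V : T -> U)
    (m : U -> 'rV[R]_d) (b : 'rV[R]_d) (D : set T) :
  is_cond_exp_vec P V Z m -> measurable D ->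
  measurable_fun setT (fun x => dotv b (m (V x))) /\
  P.-integrable D (EFin \o (fun x => dotv b (m (V x)))).
Proof.
move=> hm mD.
have iT i : P.-integrable setT (EFin \o (fun x => m (V x) ord0 i)).
  by case: (hm i).
split.
  apply/measurable_EFinP.
  exact: (measurable_int P (Rintegral_dotv b measurableT iT).1).
have iD i := integrableS measurableT mD (subsetT _) (iT i).
exact: (Rintegral_dotv b mD iD).1.
Qed.

(* Two versions of conditional expectation of Z, given V1 and given V2,
   have projections with the same integral over a common event
   V1^-1 B1 = V2^-1 B2: both integrate like the projection of Z. *)
Lemma cond_exp_dotv_agree (dU1 dU2 : measure_display)
    (U1 : measurableType dU1) (U2 : measurableType dU2)
    (V1 : T -> U1) (V2 : T -> U2) (m1 : U1 -> 'rV[R]_d) (m2 : U2 -> 'rV[R]_d)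
    (b : 'rV[R]_d) (B1 : set U1) (B2 : set U2) :
  is_cond_exp_vec P V1 Z m1 -> is_cond_exp_vec P V2 Z m2 ->
  measurable B1 -> measurable B2 -> measurable (V1 @^-1` B1) ->
  V1 @^-1` B1 = V2 @^-1` B2 ->
  Rintegral P (V1 @^-1` B1) (fun x => dotv b (m1 (V1 x))) =
  Rintegral P (V1 @^-1` B1) (fun x => dotv b (m2 (V2 x))).
Proof.
move=> hm1 hm2 mB1 mB2 mD eqB.
have iT (dV : measure_display) (UV : measurableType dV) (V : T -> UV) m :
    is_cond_exp_vec P V Z m ->
    forall i, P.-integrable (V1 @^-1` B1) (EFin \o (fun x => m (V x) ord0 i)).
  by move=> hm i; case: (hm i) => _ iV _; exact: integrableS iV.
rewrite (Rintegral_dotv b mD (iT _ _ _ _ hm1)).2 (Rintegral_dotv b mD (iT _ _ _ _ hm2)).2.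
apply: eq_bigr => i _; congr (_ * fine _).
case: (hm1 i) => _ _ <- //; case: (hm2 i) => _ _ Z2.
by rewrite eqB Z2.
Qed.

End ConditionalExpectations.

Section BlockLabel.
Context (R : realType) (T : Type) (H : nat) (A : 'I_H -> set T).
Hypothesis disjA : forall h k, h != k -> A h `&` A k = set0.
Hypothesis covA : forall x, exists h, A h x.

(* The label h+1 of the block containing x; this is the variable W of the
   theorem when A h = Y^-1 S_h. *)
Definition block_label (x : T) : R := \sum_(h < H) (h.+1)%:R * \1_(A h) x.

Lemma block_label_on (h : 'I_H) (x : T) : A h x -> block_label x = (h.+1)%:R.
Proof.
move=> Ahx; rewrite /block_label (bigD1 h) //= indicE mem_set // mulr1.
rewrite big1 ?addr0 // => k kh; rewrite indicE memNset ?mulr0 // => Akx.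
by have : (A k `&` A h) x by []; rewrite disjA.
Qed.

Lemma block_label_preimage (h : 'I_H) : block_label @^-1` [set (h.+1)%:R] = A h.
Proof.
apply/seteqP; split => x /=; last by move/block_label_on.
have [k Akx] := covA x; rewrite (block_label_on Akx) => /eqP.
rewrite eqr_nat eqSS => /eqP kh.
by have -> : h = k by apply: val_inj.
Qed.

End BlockLabel.

Lemma preimage_partition (dT dU : measure_display) (T : measurableType dT)
    (U : measurableType dU) (Y : T -> U) (H : nat) (S : 'I_H -> set U) :
  measurable_fun setT Y -> (forall h, measurable (S h)) ->
  (forall h k, h != k -> S h `&` S k = set0) ->
  range Y `<=` \bigcup_(h in [set: 'I_H]) S h ->
  [/\ forall h, measurable (Y @^-1` S h),
      forall h k, h != k -> Y @^-1` S h `&` Y @^-1` S k = set0 &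
      forall x, exists h, (Y @^-1` S h) x].
Proof.
move=> mY mS disjS covS; split.
- by move=> h; rewrite -(setTI (_ @^-1` _)); exact: mY.
- by move=> h k hk; rewrite -preimage_setI disjS // preimage_set0.
- move=> x; have : range Y (Y x) by exists x.
  by move/covS => [h _ Sh]; exists h.
Qed.

Theorem mainTheorem12 (R : realType) (dT : measure_display) (T : measurableType dT)
  (P : probability T R) (d : nat) (Z : T -> 'rV[R]_d)
  (dU : measure_display) (U : measurableType dU) (Y : T -> U)
  (H : nat) (S : 'I_H -> set U) (gamma tau : R) :
  (* Z is a square-integrable random vector in R^d *)
  (forall i : 'I_d, measurable_fun setT (fun x => Z x ord0 i)) ->
  (forall i : 'I_d, P.-integrable setT (fun x => ((Z x ord0 i) ^+ 2)%:E)) ->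
  (* Y is a random element *)
  measurable_fun setT Y ->
  (* {S_h} is a (measurable) partition of the range of Y *)
  (forall h, measurable (S h)) ->
  (forall h k, h != k -> S h `&` S k = set0) ->
  range Y `<=` \bigcup_(h in [set: 'I_H]) S h ->
  0 < gamma -> 1 + gamma < tau ->
  (forall h, (0 < P (Y @^-1` S h))%E /\
             (P (Y @^-1` S h) <= ((1 + gamma) / H%:R)%:E)%E) ->
  forall m : U -> 'rV[R]_d, is_cond_exp_vec P Y Z m ->
  (forall beta : 'rV[R]_d, dotv beta beta = 1 ->
     H%:R^-1 * \sum_(h < H) cvar_event P (Y @^-1` S h) (fun x => dotv beta (m (Y x)))
       <= tau^-1 * var_rv P (fun x => dotv beta (m (Y x)))) ->
  let W : T -> R := fun x => \sum_(h < H) (h.+1)%:R * \1_(Y @^-1` S h) x in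
  forall mW : R -> 'rV[R]_d, is_cond_exp_vec P W Z mW ->
  forall beta : 'rV[R]_d, dotv beta beta = 1 ->
    (1 - (1 + gamma) / tau) * var_rv P (fun x => dotv beta (m (Y x)))
      <= var_rv P (fun x => dotv beta (mW (W x))).
Proof.
move=> _ _ mY mS disjS covS gamma_gt0 _ hP m hm within_le W mW hmW beta beta1.
set A := fun h => Y @^-1` S h.
have [mA disjA covA] := preimage_partition mY mS disjS covS.
set f := fun x => dotv beta (m (Y x)); set g := fun x => dotv beta (mW (W x)).
have PA h : P (A h) = (fine (P (A h)))%:E.
  by rewrite fineK // fin_num_measure //; exact: mA.
have pA_gt0 h : 0 < fine (P (A h)) by have [+ _] := hP h; rewrite -/(A h) PA lte_fin.
have pA_le h : fine (P (A h)) <= (1 + gamma) / H%:R.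
  by have [_ +] := hP h; rewrite -/(A h) PA lee_fin.
have [mf intf] := cond_exp_dotv beta hm measurableT.
have [mg _] := cond_exp_dotv beta hmW measurableT.
have g_step h x : A h x -> g x = dotv beta (mW (h.+1)%:R).
  move=> Ahx; rewrite /g; congr (dotv beta (mW _)).
  exact: (block_label_on R disjA Ahx).
have fgA h : Rintegral P (A h) f = Rintegral P (A h) g.
  apply: (cond_exp_dotv_agree beta hm hmW (mS h) (measurable_set1 _) (mA h)).
  exact/esym/(block_label_preimage R disjA covA).
have [iq|niq] := pselect (P.-integrable setT (EFin \o (fun x => (f x - expect P f) ^+ 2))).
  2: by rewrite var_rv_not_integrable // mulr0 var_rv_ge0.
have var_split := var_coarsen mA disjA covA pA_gt0 mf intf mg g_step fgA iq.
have within_bound : \sum_(h < H) fine (P (A h)) * cvar_event P (A h) f <=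
    (1 + gamma) * (tau^-1 * var_rv P f).
  apply: le_trans (weighted_sum_le pA_le (fun h => cvar_event_ge0 P (A h) f)) _.
  by apply: ler_wpM2l; [rewrite addr_ge0 // ltW | exact: within_le].
rewrite mulrBl mul1r -mulrA lerBlDr {1}var_split addrC lerD2l.
exact: within_bound.
Qed.
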